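(* Let $n\ge3$, $1\le k\le n$, $c_0>0$, and let $u\in C^2(\overline{\mathbb{R}^n_+})$ be positive with $\sigma_k(A^u)=2^k\binom nk$, $g_u\in\Gamma_k^+$ in $\overline{\mathbb{R}^n_+}$, $\mathcal{B}_k^{g_u}=c_0$ on $\partial\mathbb{R}^n_+$, and assume $u_{0,1}(x):=|x|^{2-n}u(x/|x|^2)$ extends to a positive function in $C^2(\overline{B_1^+})$. Then $\bar\lambda(x)<\infty$ for every $x\in\partial\mathbb{R}^n_+$.
   Context: $B_1^+=B_1\cap\mathbb{R}^n_+$. For $x\in\partial\mathbb{R}^n_+$, $\lambda>0$: $u_{x,\lambda}(y):=\big(\frac{\lambda}{|y-x|}\big)^{n-2}u\big(x+\frac{\lambda^2(y-x)}{|y-x|^2}\big)$, and $\bar\lambda(x):=\sup\{\mu>0: u_{x,\lambda}\le u \text{ in } \overline{\mathbb{R}^n_+}\setminus B_\lambda(x)\ \forall\,0<\lambda<\mu\}$. For positive $C^2$ $u$: $g_u=u^{4/(n-2)}|dx|^2$, $A^u=-\frac{2}{n-2}u^{-\frac{n+2}{n-2}}\nabla^2u+\frac{2n}{(n-2)^2}u^{-\frac{2n}{n-2}}\nabla u\otimes\nabla u-\frac{2}{(n-2)^2}u^{-\frac{2n}{n-2}}|\nabla u|^2I_n$; $\sigma_s$ is the $s$-th elementary symmetric function of eigenvalues; $\Gamma_k^+=\{\lambda:\sigma_1(\lambda)>0,\dots,\sigma_k(\lambda)>0\}$, $g_u\in\Gamma_k^+$ meaning eigenvalues of $A^u$ in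 $\Gamma_k^+$. On $\partial\mathbb{R}^n_+$: $h_{g_u}=-\frac{2}{n-2}u^{-\frac n{n-2}}\partial_{x_n}u$, $A^{\mathrm T}_{g_u}=((A^u)_{\alpha\beta})_{1\le\alpha,\beta\le n-1}$, $\mathcal{B}_k^{g_u}=\frac{(n-1)!}{(n-k)!(2k-1)!!}h_{g_u}^{2k-1}+\sum_{s=1}^{k-1}\frac{(n-1-s)!}{(n-k)!(2k-2s-1)!!}\sigma_s(A^{\mathrm T}_{g_u})h_{g_u}^{2k-2s-1}$. *)

From HB Require Import structures.
From mathcomp Require Import all_boot all_order all_algebra.
From mathcomp Require Import all_classical all_reals all_analysis.
Set Implicit Arguments. Unset Strict Implicit. Unset Printing Implicit Defensive.
Import Order.TTheory GRing.Theory Num.Theory.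
Import numFieldNormedType.Exports.
Local Open Scope ring_scope.
Local Open Scope classical_set_scope.

(* sigma_s of the eigenvalues of a square matrix M of size m:
   if char_poly M = \prod_i ('X - lambda_i) then sigma_s(lambda) is, by Vieta,
   (-1)^s times the coefficient of 'X^(m-s) of char_poly M. *)
Definition msigma (R : realType) (m s : nat) (M : 'M[R]_m) : R :=
  (-1) ^+ s * (char_poly M)`_(m - s).

Definition in_Gamma (R : realType) (m k : nat) (M : 'M[R]_m) : Prop :=
  forall j : nat, (1 <= j <= k)%N -> 0 < msigma j M.

(* odd double factorial : dfo m = (2m-1)!! = 1 * 3 * ... * (2m-1) *)
Definition dfo (m : nat) : nat := \prod_(i < m) (2 * i + 1).

Section Defs.
Variables (R : realType) (n : nat).
Local Notation pt := 'rV[R]_n.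

(* j-th coordinate (0-based) of a point; 0 if j >= n *)
Definition coord (x : pt) (j : nat) : R :=
  odflt 0 (omap (fun i : 'I_n => x 0 i) (insub j)).

Definition xn (x : pt) : R := coord x n.-1.

Definition enorm (x : pt) : R := Num.sqrt (\sum_i x 0 i ^+ 2).

Definition closed_half : set pt := [set x | 0 <= xn x].
Definition bdry_half : set pt := [set x | xn x = 0].
Definition closed_half_ball : set pt := [set x | enorm x <= 1 /\ 0 <= xn x].

Definition ebasis (i : 'I_n) : pt := delta_mx 0 i.
Definition elast : pt := \row_i ((val i == n.-1)%:R).

Definition partial (i : 'I_n) (f : pt -> R) : pt -> R :=
  fun x => 'D_(ebasis i) f x.

Definition C2 (f : pt -> R) : Prop :=
  (forall x, differentiable f x) /\
  (forall i x, differentiable (partial i f) x) /\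
  (forall i j, continuous (partial j (partial i f))).

Definition grad (f : pt -> R) (x : pt) : pt := \row_i partial i f x.
Definition hess (f : pt -> R) (x : pt) : 'M[R]_n :=
  \matrix_(i, j) partial j (partial i f) x.

Definition Aten (u : pt -> R) (x : pt) : 'M[R]_n :=
  let a := n%:R - 2 in
  (- (2 / a) * u x `^ (- (n%:R + 2) / a)) *: hess u x
  + (2 * n%:R / a ^+ 2 * u x `^ (- (2 * n%:R) / a)) *: ((grad u x)^T *m grad u x)
  - (2 / a ^+ 2 * u x `^ (- (2 * n%:R) / a) * \sum_i (grad u x 0 i) ^+ 2)
      *: (1%:M : 'M[R]_n).

Definition tang (u : pt -> R) (x : pt) : 'M[R]_n.-1 :=
  \matrix_(i, j) Aten u x (widen_ord (leq_pred n) i) (widen_ord (leq_pred n) j).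

Definition hmean (u : pt -> R) (x : pt) : R :=
  - (2 / (n%:R - 2)) * u x `^ (- n%:R / (n%:R - 2)) * 'D_elast u x.

Definition Bk (k : nat) (u : pt -> R) (x : pt) : R :=
  (n.-1)`!%:R / ((n - k)`!%:R * (dfo k)%:R) * hmean u x ^+ (2 * k - 1)
  + \sum_(1 <= s < k)
      ((n.-1 - s)`!%:R / ((n - k)`!%:R * (dfo (k - s))%:R)
       * msigma s (tang u x) * hmean u x ^+ (2 * k - 2 * s - 1)).

Definition ukl (u : pt -> R) (x : pt) (lam : R) (y : pt) : R :=
  (lam / enorm (y - x)) ^+ (n - 2)
  * u (x + (lam ^+ 2 / enorm (y - x) ^+ 2) *: (y - x)).

Definition lambar_set (u : pt -> R) (x : pt) : set R :=
  [set mu | 0 < mu /\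
    forall lam, 0 < lam < mu ->
      forall y, closed_half y -> lam <= enorm (y - x) -> ukl u x lam y <= u y].

Definition lambar (u : pt -> R) (x : pt) : \bar R :=
  ereal_sup [set mu%:E | mu in lambar_set u x].

End Defs.

From Pilot Require Import Defs.
From HB Require Import structures.
From mathcomp Require Import all_boot all_order all_algebra.
From mathcomp Require Import all_classical all_reals all_analysis.
From mathcomp Require Import lra.
Set Implicit Arguments.
Unset Strict Implicit.
Unset Printing Implicit Defensive.

Import Order.TTheory GRing.Theory Num.Theory.
Import numFieldNormedType.Exports.
Local Open Scope ring_scope.
Local Open Scope classical_set_scope.

(* For x on the boundary, test the reflection inequality at the points y_t = x + t e_n of
   the vertical ray. For t >= lam it reads
     (lam / t)^(n-2) u(x + (lam^2 / t) e_n) <= u(y_t),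
   and multiplying by |y_t|^(n-2) >= t^(n-2) gives
     lam^(n-2) u(x + (lam^2 / t) e_n) <= |y_t|^(n-2) u(y_t) = u_{0,1}(y_t / |y_t|^2).
   As t -> oo the left side tends to lam^(n-2) u(x) and, by continuity of u_{0,1} at 0,
   the right side is eventually below u_{0,1}(0) + 1. Hence lam^(n-2) u(x) <= u_{0,1}(0) + 1
   for every lam < lambar(x), which bounds lambar(x) since n >= 3. *)

Lemma le_max1_of_exprM_le (R : realFieldType) (a C lam : R) m :
  0 < a -> (0 < m)%N -> lam ^+ m * a <= C -> lam <= Num.max 1 (C / a).
Proof.
move=> a_gt0 m_gt0 le_C; rewrite le_max; case: (lerP lam 1) => // lam_gt1.
rewrite ler_pdivlMr // (le_trans _ le_C) ?orbT // ler_wpM2r ?(ltW a_gt0) //.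
exact: ler_eXnr m_gt0 (ltW lam_gt1).
Qed.

Section HalfSpace.
Variables (R : realType) (n : nat).
Hypothesis n_gt0 : (0 < n)%N.
Local Notation pt := 'rV[R]_n.
Local Notation e := (elast R n).

Let lt_pred_n : (n.-1 < n)%N. Proof. by rewrite ltn_predL. Qed.
Let ord_last : 'I_n := Ordinal lt_pred_n.

Lemma xnE (x : pt) : xn x = x 0 ord_last.
Proof.
by rewrite /xn /Defs.coord (@insubT _ _ 'I_n _ lt_pred_n) /=; congr (x 0 _); apply: val_inj.
Qed.

Lemma elastE i : e 0 i = (i == ord_last)%:R.
Proof. by rewrite mxE. Qed.

Lemma enorm_ge0 (z : pt) : 0 <= enorm z.
Proof. exact: sqrtr_ge0. Qed.

Lemma enormZ c (z : pt) : enorm (c *: z) = `|c| * enorm z.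
Proof.
rewrite /enorm; under eq_bigr do rewrite mxE exprMn.
by rewrite -mulr_sumr sqrtrM ?sqr_ge0 // sqrtr_sqr.
Qed.

Lemma enorm0 : enorm (0 : pt) = 0.
Proof. by rewrite -(scale0r 0) enormZ normr0 mul0r. Qed.

Lemma enorm_elast : enorm e = 1.
Proof.
rewrite /enorm (bigD1 ord_last) //= big1 => [|i /negbTE neq_i].
  by rewrite elastE eqxx addr0 expr1n sqrtr1.
by rewrite elastE neq_i expr0n.
Qed.

Lemma coord_le_enorm (z : pt) i : `|z 0 i| <= enorm z.
Proof.
rewrite -sqrtr_sqr ler_sqrt; last by apply: sumr_ge0 => j _; exact: sqr_ge0.
by rewrite (bigD1 i) //= lerDl; apply: sumr_ge0 => j _; exact: sqr_ge0.
Qed.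

Lemma normr_le_enorm (z : pt) : `|z| <= enorm z.
Proof.
rewrite [leLHS]/Num.Def.normr /= mx_normrE.
apply: bigmax_le => [|[i j] _]; first exact: enorm_ge0.
by rewrite (ord1 i); exact: coord_le_enorm.
Qed.

Lemma enorm_scale_elast t : 0 <= t -> enorm (t *: e) = t.
Proof. by move=> t_ge0; rewrite enormZ enorm_elast mulr1 ger0_norm. Qed.

Definition inversion (y : pt) : pt := (enorm y ^+ 2)^-1 *: y.

Lemma enorm_inversion y : enorm (inversion y) = (enorm y)^-1.
Proof.
rewrite enormZ ger0_norm ?invr_ge0 ?exprn_ge0 ?enorm_ge0 //.
have [->|N_neq0] := eqVneq (enorm y) 0; first by rewrite mulr0 invr0.
by rewrite expr2 invfM -mulrA mulVf ?mulr1.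
Qed.

Lemma inversionK y : 0 < enorm y -> inversion (inversion y) = y.
Proof.
move=> N_gt0; rewrite /inversion enorm_inversion scalerA exprVn invrK.
by rewrite mulfV ?scale1r // expf_neq0 // gt_eqF.
Qed.

Lemma inversion_neq0 y : 0 < enorm y -> inversion y != 0.
Proof.
move=> N_gt0; have : (enorm y)^-1 != 0 by rewrite invr_neq0 // lt0r_neq0.
by apply: contra_neq => inv0; rewrite -enorm_inversion inv0 enorm0.
Qed.

Lemma closed_half_inversion y : closed_half y -> closed_half (inversion y).
Proof.
rewrite /closed_half /= !xnE mxE => y_ge0.
by rewrite mulr_ge0 // invr_ge0 exprn_ge0 ?enorm_ge0.
Qed.

Section Ray.
Variable x : pt.
Hypothesis x_bdry : bdry_half x.

Lemma xn_ray t : xn (x + t *: e) = t.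
Proof.
by move: x_bdry; rewrite /bdry_half /= !xnE !mxE /= eqxx mulr1 => ->; rewrite add0r.
Qed.

Lemma closed_half_ray t : 0 <= t -> closed_half (x + t *: e).
Proof. by rewrite /closed_half /= xn_ray. Qed.

Lemma enorm_ray_ge t : 0 <= t -> t <= enorm (x + t *: e).
Proof.
by move=> t_ge0; rewrite -{1}(xn_ray t) xnE -[leLHS]ger0_norm ?coord_le_enorm // -xnE xn_ray.
Qed.

Lemma inversion_ray_cvg : inversion (x + t *: e) @[t --> +oo] --> (0 : pt).
Proof.
apply/cvgr0Pnorm_le => eps eps_gt0; near=> t.
have eps_inv_gt0 : 0 < eps^-1 by rewrite invr_gt0.
have t_ge : eps^-1 <= t by near: t; apply: nbhs_pinfty_ge; rewrite num_real.
have N_ge : eps^-1 <= enorm (x + t *: e).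
  exact: le_trans t_ge (enorm_ray_ge (le_trans (ltW eps_inv_gt0) t_ge)).
apply: le_trans (normr_le_enorm _) _.
by rewrite enorm_inversion -[leRHS]invrK lef_pV2 ?posrE // (lt_le_trans eps_inv_gt0 N_ge).
Unshelve. all: by end_near.
Qed.

End Ray.

End HalfSpace.

Section Kelvin.
Variables (R : realType) (n : nat).
Hypothesis n_ge2 : (2 <= n)%N.
Local Notation pt := 'rV[R]_n.
Local Notation e := (elast R n).
Let n_gt0 : (0 < n)%N := ltnW n_ge2.

Variables u v : pt -> R.
Hypothesis kelvin : forall w, closed_half_ball w -> w != 0 ->
  v w = enorm w `^ (2 - n%:R) * u (inversion w).

Lemma kelvin_inversion y : closed_half y -> 1 <= enorm y ->
  v (inversion y) = enorm y ^+ (n - 2) * u y.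
Proof.
move=> y_half N_ge1; have N_gt0 : 0 < enorm y := lt_le_trans ltr01 N_ge1.
rewrite kelvin ?inversionK ?inversion_neq0 //; last first.
  by split; [rewrite enorm_inversion invf_le1 | exact: closed_half_inversion].
congr (_ * _); rewrite enorm_inversion.
have -> : 2 - n%:R = - (n - 2)%N%:R :> R by rewrite natrB // opprB.
by rewrite powRN powR_mulrn ?invr_ge0 ?ltW // exprVn invrK.
Qed.

Lemma kelvin_ray_bounded x : bdry_half x -> {for 0, continuous v} ->
  \forall t \near +oo, enorm (x + t *: e) ^+ (n - 2) * u (x + t *: e) <= v 0 + 1.
Proof.
move=> x_bdry v_cont; near=> t.
have t_ge1 : 1 <= t by near: t; apply: nbhs_pinfty_ge; rewrite num_real.
have t_ge0 : 0 <= t := le_trans ler01 t_ge1.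
have y_half := closed_half_ray n_gt0 x_bdry t_ge0.
have N_ge1 := le_trans t_ge1 (enorm_ray_ge n_gt0 x_bdry t_ge0).
rewrite -kelvin_inversion //.
near: t; apply: (cvgr_le _ (cvg_comp _ _ (inversion_ray_cvg n_gt0 x_bdry) v_cont)).
by rewrite ltrDl.
Unshelve. all: by end_near.
Qed.

End Kelvin.

Section Lambar.
Variables (R : realType) (n : nat).
Hypothesis n_gt0 : (0 < n)%N.
Local Notation pt := 'rV[R]_n.
Local Notation e := (elast R n).
Variables (u : pt -> R) (x : pt).
Hypothesis x_bdry : bdry_half x.

Lemma ukl_ray lam t : 0 < t ->
  ukl u x lam (x + t *: e) = (lam / t) ^+ (n - 2) * u (x + (lam ^+ 2 / t) *: e).
Proof.
move=> t_gt0; rewrite /ukl.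
have -> : x + t *: e - x = t *: e by rewrite addrC addKr.
rewrite enorm_scale_elast ?ltW // scalerA.
congr (_ * u (x + _ *: e)).
by rewrite [t ^+ 2]expr2 invfM mulrA -mulrA mulVf ?mulr1 // gt_eqF.
Qed.

Lemma ray_cvg (s : R -> R) : s t @[t --> +oo] --> 0 ->
  (x + s t *: e) @[t --> +oo] --> x.
Proof.
move=> s_cvg; rewrite -[X in _ --> X]addr0 -(scale0r e).
exact: cvgD (cvg_cst x) (cvgZ s_cvg (cvg_cst e)).
Qed.

Lemma lambar_set_pow_bound C mu lam :
  {for x, continuous u} -> (forall y, closed_half y -> 0 <= u y) ->
  (\forall t \near +oo, enorm (x + t *: e) ^+ (n - 2) * u (x + t *: e) <= C) ->
  lambar_set u x mu -> 0 < lam < mu -> lam ^+ (n - 2) * u x <= C.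
Proof.
move=> u_cont u_ge0 far_bound [_ ukl_le] lam_in; have /andP[lam_gt0 _] := lam_in.
have inv_cvg : t^-1 @[t --> +oo] --> (0 : R).
  by apply/gtr0_cvgV0; [exact: nbhs_pinfty_gt | exact: cvg_id].
have s_cvg : lam ^+ 2 / t @[t --> +oo] --> (0 : R).
  by rewrite -(mulr0 (lam ^+ 2)); exact: cvgMl_tmp inv_cvg.
apply: cvgr_to_le (cvgMl_tmp (a := lam ^+ (n - 2)) (cvg_comp _ _ (ray_cvg s_cvg) u_cont)) _.
near=> t.
have far_t : enorm (x + t *: e) ^+ (n - 2) * u (x + t *: e) <= C.
  by near: t; exact: far_bound.
have lam_le_t : lam <= t by near: t; apply: nbhs_pinfty_ge; rewrite num_real.
have t_gt0 := lt_le_trans lam_gt0 lam_le_t.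
have t_le_N := enorm_ray_ge n_gt0 x_bdry (ltW t_gt0).
have y_half := closed_half_ray n_gt0 x_bdry (ltW t_gt0).
have z_half := closed_half_ray n_gt0 x_bdry (divr_ge0 (sqr_ge0 lam) (ltW t_gt0)).
apply: le_trans far_t; set N := enorm _.
have lam_le : lam <= N * (lam / t).
  by rewrite mulrCA ler_peMr ?(ltW lam_gt0) // ler_pdivlMr // mul1r.
apply: le_trans (_ : (N * (lam / t)) ^+ (n - 2) * u (x + (lam ^+ 2 / t) *: e) <= _).
  rewrite ler_wpM2r ?u_ge0 //; apply: lerXn2r; rewrite ?nnegrE ?(ltW lam_gt0) //.
  exact: le_trans (ltW lam_gt0) lam_le.
rewrite exprMn -mulrA -ukl_ray // ler_wpM2l ?exprn_ge0 ?enorm_ge0 //.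
apply: ukl_le y_half _ => //.
by rewrite addrC addKr (enorm_scale_elast n_gt0 (ltW t_gt0)).
Unshelve. all: by end_near.
Qed.

End Lambar.

Lemma lambar_le (R : realType) (n : nat) (u : 'rV[R]_n -> R) x M : 0 <= M ->
  (forall mu lam, lambar_set u x mu -> 0 < lam < mu -> lam <= M) ->
  (lambar u x <= M%:E)%E.
Proof.
move=> M_ge0 bound; apply: ge_ereal_sup => _ [mu mu_in <-]; rewrite lee_fin.
rewrite leNgt; apply/negP => M_lt_mu.
have : (M + mu) / 2 <= M by apply: bound mu_in _; apply/andP; split; lra.
lra.
Qed.

Theorem lemma3p4 (R : realType) (n k : nat) (c0 : R) (u : 'rV[R]_n -> R) :
  (3 <= n)%N -> (1 <= k <= n)%N -> 0 < c0 ->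
  C2 u ->
  (forall x, closed_half x -> 0 < u x) ->
  (forall x, closed_half x -> msigma k (Aten u x) = 2 ^+ k * 'C(n, k)%:R) ->
  (forall x, closed_half x -> in_Gamma k (Aten u x)) ->
  (forall x, bdry_half x -> Bk k u x = c0) ->
  (exists v : 'rV[R]_n -> R, C2 v /\
     (forall x, closed_half_ball x -> 0 < v x) /\
     (forall x, closed_half_ball x -> x != 0 ->
        v x = enorm x `^ (2 - n%:R) * u ((enorm x ^+ 2)^-1 *: x))) ->
  forall x, bdry_half x -> (lambar u x < +oo)%E.
Proof.
move=> n_ge3 _ _ [u_diff _] u_pos _ _ _ [v [[v_diff _] [_ kelvin]]] x x_bdry.
have n_ge2 : (2 <= n)%N := ltnW n_ge3.
have n_gt0 : (0 < n)%N := ltnW n_ge2.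
have ux_gt0 : 0 < u x by apply: u_pos; rewrite /closed_half /= x_bdry.
have far := kelvin_ray_bounded n_ge2 kelvin x_bdry (differentiable_continuous (v_diff 0)).
apply: le_lt_trans (ltry (Num.max 1 ((v 0 + 1) / u x))).
apply: lambar_le => [|mu lam mu_in lam_in]; first by rewrite le_max ler01.
have n2_gt0 : (0 < n - 2)%N by rewrite subn_gt0.
apply: le_max1_of_exprM_le ux_gt0 n2_gt0 _.
have u_cont : {for x, continuous u} := differentiable_continuous (u_diff x).
have u_ge0 y : closed_half y -> 0 <= u y by move/u_pos/ltW.
exact: (lambar_set_pow_bound n_gt0 x_bdry u_cont u_ge0 far mu_in lam_in).
Qed.
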